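(* Let $m\ge6$ be even, $t=m/2$, and $s$ an integer with $2\le s\le 2^{t-1}$. Let $E_1,\dots,E_\alpha$ be a partial spread in $\mathbb{F}_2^m$ and $A,B\subseteq\{1,\dots,\alpha\}$ with $|A|=|B|=s$ and $|A\cap B|=1$. Let $f=\sum_{i\in A}f_i$, $g=\sum_{i\in B}f_i$, and $F=\{f,g,f+g\}$. Then for every $\mathbf{h}\in\mathbb{F}_2^m$ and all $f_1,f_2\in F$ with $f_1\neq f_2$, \[\widehat{f_1}(\mathbf{0})+\widehat{f_2}(\mathbf{h})-\widehat{f_1+f_2}(\mathbf{h})\neq 2^m.\]
   Context: A partial spread in $\mathbb{F}_2^m$ ($m=2t$) is a set of subspaces $E_1,\dots,E_\alpha$ of $\mathbb{F}_2^m$, each of dimension $t$, with $E_i\cap E_j=\{\mathbf{0}\}$ for $i\ne j$. $f_i:\mathbb{F}_2^m\to\mathbb{F}_2$ is the indicator function of $E_i\setminus\{\mathbf{0}\}$; sums of Boolean functions are mod 2. For a Boolean function $h$, $\widehat{h}(\mathbf{w})=\sum_{\mathbf{x}\in\mathbb{F}_2^m}(-1)^{h(\mathbf{x})+\mathbf{w}\cdot\mathbf{x}}$ with the standard inner product. *)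

From HB Require Import structures.
From mathcomp Require Import all_boot all_order all_algebra.
Set Implicit Arguments. Unset Strict Implicit. Unset Printing Implicit Defensive.
Import GRing.Theory Num.Theory.
Local Open Scope ring_scope.

Notation vec m := 'rV['F_2]_m.
Notation boolfun m := {ffun vec m -> 'F_2}.

Definition dotv (m : nat) (w x : vec m) : 'F_2 := \sum_(i < m) w 0 i * x 0 i.

Definition sgnF2 (b : 'F_2) : int := if b == 0 then 1 else -1.

Definition walsh (m : nat) (h : boolfun m) (w : vec m) : int :=
  \sum_(x : vec m) sgnF2 (h x + dotv w x).

Definition partial_spread (m t alpha : nat) (E : 'I_alpha -> {vspace vec m}) : Prop :=
  (forall i, \dim (E i) = t) /\
  (forall i j, i != j -> (E i :&: E j)%VS = 0%VS).

Definition spread_ind (m alpha : nat) (E : 'I_alpha -> {vspace vec m}) (i : 'I_alpha)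
  : boolfun m := [ffun x => if (x \in E i) && (x != 0) then 1 else 0].

Definition spread_sum (m alpha : nat) (E : 'I_alpha -> {vspace vec m}) (A : {set 'I_alpha})
  : boolfun m := \sum_(i in A) spread_ind E i.

From HB Require Import structures.
From mathcomp Require Import all_boot all_order all_algebra finfield zify ring.
Set Implicit Arguments. Unset Strict Implicit. Unset Printing Implicit Defensive.
Import GRing.Theory Num.Theory.
Local Open Scope ring_scope.

(* Write N = 2^(t+1) and U = 2^(t-1), so that N = 4U and 2^m = 4U * U.
   The heart of the proof is a congruence for the Walsh values of sums of
   spread indicators: for every set C of spread indices and every w,
       walsh f_C w = 2 |C|  (mod N),   where f_C = sum_(i in C) f_i.
   It follows from orthogonality of characters: (-1)^(w.x) sums to 0 or to
   the cardinality over any subspace, so walsh 0 w is 0 or 2^(2t), and adding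
   the indicator of E_j \ {0}, whose support is disjoint from the other E_i,
   changes a Walsh value by 2 - 2 * (0 or 2^t).
   Next, f_X + f_Y = f_(X (+) Y) with |X (+) Y| = |X| + |Y| - 2 |X :&: Y|, so
   F = {f_A, f_B, f_(A (+) B)}.  Two distinct members f1 = f_X, f2 = f_Y of F
   give f1 + f2 = f_(X (+) Y) and X :&: Y is one of A :&: B, A :\: B, B :\: A,
   of size d = 1 or s - 1.  Hence the left-hand side is 4d (mod 4U), and it
   cannot equal 4U * U because 0 < d < U. *)

Lemma F2_cases (a : 'F_2) : a = 0 \/ a = 1.
Proof. by case: a => [[|[|n]] //= ?]; [left | right]; apply: val_inj. Qed.

Lemma F2_addrr (a : 'F_2) : a + a = 0.
Proof. by apply: (addrr_pchar2 (@pchar_Fp 2 isT)). Qed.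

Lemma sgnF2D (a b : 'F_2) : sgnF2 (a + b) = sgnF2 a * sgnF2 b.
Proof.
by case: (F2_cases a) => ->; case: (F2_cases b) => ->; rewrite ?addr0 ?add0r ?F2_addrr.
Qed.

Section CharacterSums.

Variable m : nat.
Implicit Types (w x y : vec m) (V : {vspace vec m}).

Lemma dotvD w x y : dotv w (x + y) = dotv w x + dotv w y.
Proof. by rewrite /dotv -big_split; apply: eq_bigr => i _; rewrite mxE mulrDr. Qed.

Lemma dotv0 w : dotv w 0 = 0.
Proof. by rewrite /dotv big1 // => i _; rewrite mxE mulr0. Qed.

Lemma char_sum_subspace w V :
  (\sum_(x in V) sgnF2 (dotv w x) = 0) \/
  (\sum_(x in V) sgnF2 (dotv w x) = (2 ^ \dim V)%N%:Z).
Proof.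
have cardV : #|V| = (2 ^ \dim V)%N by rewrite card_vspace card_Fp.
have [v0 /andP [Vv0 /eqP wv0] | trivial] :=
  pickP [pred v | (v \in V) && (dotv w v == 1)]; [left | right].
- (* translating by v0 flips every sign, so the sum equals its opposite *)
  set S := \sum_(x in V) _.
  have S_opp : S = - S.
    rewrite {1}/S (reindex_inj (addIr v0)) /= -sumrN.
    apply: eq_big => [x | x _]; first by rewrite rpredDr.
    by rewrite dotvD sgnF2D wv0 /sgnF2 /= mulrN1.
  lia.
- rewrite -cardV -natz -sumr_const; apply: eq_bigr => x Vx.
  by have := trivial x; rewrite /= Vx /=; case: (F2_cases (dotv w x)) => ->.
Qed.

Lemma walsh0_cases w : walsh 0 w = 0 \/ walsh 0 w = (2 ^ m)%N%:Z.
Proof.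
have walsh0E : walsh 0 w = \sum_(x in (fullv : {vspace vec m})) sgnF2 (dotv w x).
  by apply: eq_big => [x | x _]; rewrite ?memvf ?ffunE ?add0r.
by have := char_sum_subspace w fullv; rewrite dimvf /dim /= mul1n -walsh0E.
Qed.

Lemma walsh_disjointD (a b : boolfun m) w : (forall x, a x * b x = 0) ->
  walsh (a + b) w = walsh a w + walsh b w - walsh 0 w.
Proof.
move=> disj; rewrite /walsh -big_split -sumrB; apply: eq_bigr => x _.
rewrite !ffunE add0r !sgnF2D; have := disj x.
case: (F2_cases (a x)) => ->; case: (F2_cases (b x)) => ->;
  rewrite ?mul0r ?mulr0 ?mul1r //= => _; rewrite /sgnF2 /=; ring.
Qed.

End CharacterSums.

Section Spread.

Variables (m t alpha : nat) (E : 'I_alpha -> {vspace vec m}).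

(* The indicator of E_j \ {0} flips the sign of the character on E_j \ {0}. *)
Lemma walsh_spread_ind j w :
  walsh (spread_ind E j) w =
  walsh 0 w - 2 * \sum_(x in E j) sgnF2 (dotv w x) + 2.
Proof.
have flip x : sgnF2 (spread_ind E j x + dotv w x) = sgnF2 ((0 : boolfun m) x + dotv w x)
    - 2 * (if (x \in E j) && (x != 0) then sgnF2 (dotv w x) else 0).
  rewrite !ffunE add0r sgnF2D; case: ifP => _; rewrite /sgnF2 /=;
    case: (dotv w x == 0); lia.
rewrite /walsh (eq_bigr _ (fun x _ => flip x)) sumrB -mulr_sumr -big_mkcond /=.
rewrite [X in _ = _ - 2 * X + _](bigD1 0) ?mem0v //= dotv0 /sgnF2 /=; ring.
Qed.

Hypotheses (spreadE : partial_spread t E) (t_gt0 : (0 < t)%N) (m_2t : m = (2 * t)%N).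

Lemma spread_ind_disjoint i j x :
  i != j -> spread_ind E i x * spread_ind E j x = 0.
Proof.
move=> ij; rewrite !ffunE.
case: ifP => [/andP [xEi x0] | _]; last by rewrite mul0r.
case: ifP => [/andP [xEj _] | _]; last by rewrite mulr0.
have : x \in (E i :&: E j)%VS by rewrite memv_cap xEi xEj.
by rewrite spreadE.2 // memv0 (negbTE x0).
Qed.

Lemma walsh_spread_sum_mod (C : {set 'I_alpha}) w :
  exists k : int, walsh (spread_sum E C) w = 2 * #|C|%:Z + k * (2 ^ t.+1)%N%:Z.
Proof.
have exp_m : (2 ^ m = 2 ^ (t - 1) * 2 ^ t.+1)%N by rewrite -expnD; congr (2 ^ _)%N; lia.
have exp_t : (2 ^ t.+1 = 2 * 2 ^ t)%N by rewrite expnS.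
rewrite /spread_sum -big_enum cardE; elim: (enum C) (enum_uniq (mem C)) => [_|j r IH].
  rewrite big_nil /=; have [->|->] := walsh0_cases w; first by exists 0.
  by exists (2 ^ (t - 1))%N; rewrite exp_m PoszM; ring.
move=> /= /andP [j_r uniq_r]; have [k walshE] := IH uniq_r.
rewrite big_cons walsh_disjointD; last first.
  move=> x; rewrite sum_ffunE mulr_sumr big1_seq // => i /andP [_ i_r].
  by apply: spread_ind_disjoint; apply: contraNneq j_r => ->.
rewrite walsh_spread_ind walshE.
rewrite -[(size r).+1]addn1 PoszD exp_t PoszM.
have [->|->] := char_sum_subspace w (E j); first by exists k; ring.
by exists (k - 1); rewrite spreadE.1; ring.
Qed.

End Spread.

Definition symdiff {T : finType} (A B : {set T}) : {set T} := (A :\: B) :|: (B :\: A).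

Lemma card_symdiff (T : finType) (A B : {set T}) :
  (#|symdiff A B| + 2 * #|A :&: B| = #|A| + #|B|)%N.
Proof.
have disjD : (A :\: B) :&: (B :\: A) = set0.
  by apply/setP => i; rewrite !inE; case: (i \in A); case: (i \in B).
rewrite cardsU disjD cards0 !cardsD [B :&: A]setIC.
have := subset_leq_card (subsetIl A B); have := subset_leq_card (subsetIr A B); lia.
Qed.

(* Since f_i + f_i = 0, adding the functions f_A and f_B gives f_(A (+) B). *)
Lemma spread_sum_add (m alpha : nat) (E : 'I_alpha -> {vspace vec m}) (A B : {set 'I_alpha}) :
  spread_sum E A + spread_sum E B = spread_sum E (symdiff A B).
Proof.
have boolfun_addrr (a : boolfun m) : a + a = 0.
  by apply/ffunP => x; rewrite !ffunE F2_addrr.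
rewrite /spread_sum (big_setID B) [X in _ + X = _](big_setID A) /= setIC.
rewrite [RHS](eq_bigl [predU A :\: B & B :\: A]); last by move=> i; rewrite /= inE.
rewrite bigU /=; last first.
  by apply/pred0P => i /=; rewrite !inE; case: (i \in A); case: (i \in B).
by rewrite addrACA boolfun_addrr add0r.
Qed.

Lemma symdiff_triple_meet (T : finType) (A B X Y : {set T}) :
  X \in [:: A; B; symdiff A B] -> Y \in [:: A; B; symdiff A B] -> X != Y ->
  X :&: Y \in [:: A :&: B; A :\: B; B :\: A].
Proof.
have meetA : A :&: symdiff A B = A :\: B.
  by apply/setP => i; rewrite !inE; case: (i \in A); case: (i \in B).
have meetB : B :&: symdiff A B = B :\: A.
  by apply/setP => i; rewrite !inE; case: (i \in A); case: (i \in B).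
rewrite !inE => /or3P [] /eqP -> /or3P [] /eqP ->; rewrite ?eqxx // => _;
  by rewrite ?[symdiff A B :&: _]setIC ?[B :&: A]setIC ?meetA ?meetB ?eqxx ?orbT.
Qed.

Lemma no_small_multiple (U d k : int) : 0 < d < U -> d != U * k.
Proof.
move=> /andP [d_gt0 d_ltU]; apply/eqP => d_eq; rewrite d_eq in d_gt0 d_ltU.
have [k_le0 | k_gt0] := lerP k 0.
  have : U * k <= 0 by rewrite pmulr_rle0 //; lia.
  lia.
have : U <= U * k by rewrite ler_peMr //; lia.
lia.
Qed.

Theorem lemma5 (m t s alpha : nat) (E : 'I_alpha -> {vspace 'rV['F_2]_m})
  (A B : {set 'I_alpha}) :
  (6 <= m)%N -> m = (2 * t)%N -> (2 <= s)%N -> (s <= 2 ^ (t - 1))%N ->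
  @partial_spread m t alpha E ->
  #|A| = s -> #|B| = s -> #|A :&: B| = 1%N ->
  let f := spread_sum E A in
  let g := spread_sum E B in
  forall (h : 'rV['F_2]_m) (f1 f2 : {ffun 'rV['F_2]_m -> 'F_2}),
    f1 \in [:: f; g; f + g] -> f2 \in [:: f; g; f + g] -> f1 != f2 ->
    walsh f1 0 + walsh f2 h - walsh (f1 + f2) h != (2 ^ m)%:Z.
Proof.
move=> m_ge6 m_2t s_ge2 s_leU spreadE cardA cardB cardAB f g h f1 f2.
have t_gt0 : (0 < t)%N by lia.
set U := (2 ^ (t - 1))%N in s_leU *.
have U_ge4 : (4 <= U)%N by rewrite (_ : 4 = 2 ^ 2)%N // leq_exp2l //; lia.
have exp_N : (2 ^ t.+1 = 4 * U)%N by rewrite /U (_ : 4 = 2 ^ 2)%N // -expnD; congr (2 ^ _)%N; lia.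
have exp_m : (2 ^ m = U * (4 * U))%N by rewrite -exp_N -expnD; congr (2 ^ _)%N; lia.
have F_image : [:: f; g; f + g] = map (spread_sum E) [:: A; B; symdiff A B].
  by rewrite /= spread_sum_add.
rewrite F_image => /mapP [X XF ->] /mapP [Y YF ->] fXY.
have XY : X != Y by apply: contraNneq fXY => ->.
(* X and Y meet in 1 or s - 1 points, strictly between 0 and U *)
have meet_bounds : (0 < #|X :&: Y| < U)%N.
  have := symdiff_triple_meet XF YF XY; rewrite !inE => /or3P [] /eqP ->;
    rewrite ?cardsD ?[B :&: A]setIC cardAB ?cardA ?cardB; lia.
have [a walshX] := walsh_spread_sum_mod spreadE t_gt0 m_2t X 0.
have [b walshY] := walsh_spread_sum_mod spreadE t_gt0 m_2t Y h.
have [c walshXY] := walsh_spread_sum_mod spreadE t_gt0 m_2t (symdiff X Y) h.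
have card_XY := card_symdiff X Y.
rewrite spread_sum_add walshX walshY walshXY exp_N exp_m !PoszM.
apply/eqP => sum_eq.
have /eqP[] := @no_small_multiple U #|X :&: Y| (U%:Z - a - b + c) meet_bounds.
lia.
Qed.
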